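(* Let $S\subseteq\mathbb{N}^{\mathbb{N}}$. Consider the following game: Alice fixes a sequence $f\in\mathbb{N}^{\mathbb{N}}$ (she has no information). At the start, Bob chooses a countable set $\Sigma$ of symbols of $\mathscr{L}_{\max}$ and a listing $\phi_0,\phi_1,\dots$ of all quantifier-free sentences of $\mathscr{L}_{\max}\cap\Sigma$; then on his $n$th move Bob is told the value $f(\phi_n)$ (and nothing else about $f$), and plays a natural number $b_n$ depending only on $f(\phi_0),\dots,f(\phi_n)$. Bob wins if either $f\in S$ and $b_n=1$ for all sufficiently large $n$, or $f\notin S$ and $b_n=0$ for all sufficiently large $n$. Then Bob has a winning strategy if and only if $S$ is guessable, i.e. there is $G:\mathbb{N}^{<\mathbb{N}}\to\mathbb{N}$ such that for every $f\in\mathbb{N}^{\mathbb{N}}$, $\lim_{n\to\infty}G(f(0),\dots,f(n))$ equals $1$ if $f\in S$ and $0$ if $f\notin S$.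
   Context: The language $\mathscr{L}_{\max}$ is the first-order language (with equality) having: a constant symbol $\overline{n}$ for each $n\in\mathbb{N}$; an $n$-ary function symbol $\tilde w$ for each $w:\mathbb{N}^n\to\mathbb{N}$; an $n$-ary predicate symbol $\tilde p$ for each $p\subseteq\mathbb{N}^n$; a special unary function symbol $\mathbf{f}$; and, for every $n$ and every $G:\mathbb{N}^n\times\mathbb{N}^{<\mathbb{N}}\to\mathbb{N}$, an $(n+1)$-ary function symbol $G\circ\mathbf{f}$. For $f\in\mathbb{N}^{\mathbb{N}}$, $\mathscr{M}_f$ is the structure with universe $\mathbb{N}$ interpreting $\overline n$ as $n$, $\tilde w$ as $w$, $\tilde p$ as $p$, $\mathbf f$ as $f$, and $G\circ\mathbf f$ as $(m_1,\dots,m_n,m)\mapsto G(m_1,\dots,m_n,f(0),\dots,f(m))$. For a sentence $\phi$, $f(\phi)=1$ if $\mathscr{M}_f\models\phi$ and $f(\phi)=0$ otherwise. ''Quantifier-free'' means containing no quantifiers at all (not even bounded ones). For a set $\Sigma$ of symbols of $\mathscr{L}_{\max}$, a sentence ''of $\mathscr{L}_{\max}\cap\Sigma$'' is an $\mathscr{L}_{\max}$-sentence all of whose non-logical symbols lie in $\Sigma$. *)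

From mathcomp Require Import all_boot.
Set Implicit Arguments.
Unset Strict Implicit.
Unset Printing Implicit Defensive.

Definition prefix (f : nat -> nat) (n : nat) : seq nat := [seq f i | i <- iota 0 n.+1].

(* Coerce a list of naturals to a k-tuple (exact when the size is k). *)
Definition tup (k : nat) (s : seq nat) : k.-tuple nat := insubd (nseq_tuple k 0) s.

(* N^k is represented by k.-tuple nat; subsets of N^k by boolean predicates
   (characteristic functions); N^{<N} by seq nat. *)
Inductive symbol : Type :=
| SConst (n : nat)
| SFun (k : nat) (w : k.-tuple nat -> nat)
| SPred (k : nat) (p : pred (k.-tuple nat))
| SF
| SGf (k : nat) (G : k.-tuple nat -> seq nat -> nat).     (* G o \mathbf f, arity k+1 *)

(* Closed terms (quantifier-free sentences contain no variables at all). *)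
Inductive term : Type :=
| tconst (n : nat)
| tfun (k : nat) (w : k.-tuple nat -> nat) (args : seq term)
| tf (t : term)
| tGf (k : nat) (G : k.-tuple nat -> seq nat -> nat) (args : seq term) (t : term).

Inductive qfsent : Type :=
| sbot
| seqt (t1 t2 : term)
| spred (k : nat) (p : pred (k.-tuple nat)) (args : seq term)
| sneg (a : qfsent)
| sand (a b : qfsent)
| sor (a b : qfsent)
| simp (a b : qfsent).

Fixpoint wf_term (t : term) : bool :=
  match t with
  | tconst _ => true
  | tfun k _ args => (size args == k) && all wf_term args
  | tf t => wf_term t
  | tGf k _ args t => [&& size args == k, all wf_term args & wf_term t]
  end.

Fixpoint wf_sent (a : qfsent) : bool :=
  match a with
  | sbot => true
  | seqt t1 t2 => wf_term t1 && wf_term t2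
  | spred k _ args => (size args == k) && all wf_term args
  | sneg a => wf_sent a
  | sand a b | sor a b | simp a b => wf_sent a && wf_sent b
  end.

Fixpoint allProp (T : Type) (P : T -> Prop) (l : seq T) : Prop :=
  match l with [::] => True | u :: l' => P u /\ allProp P l' end.

Fixpoint term_in (Sigma : symbol -> Prop) (t : term) : Prop :=
  match t with
  | tconst n => Sigma (SConst n)
  | tfun k w args => Sigma (SFun w) /\ allProp (term_in Sigma) args
  | tf t => Sigma SF /\ term_in Sigma t
  | tGf k G args t => [/\ Sigma (SGf G), allProp (term_in Sigma) args & term_in Sigma t]
  end.

Fixpoint sent_in (Sigma : symbol -> Prop) (a : qfsent) : Prop :=
  match a with
  | sbot => True
  | seqt t1 t2 => term_in Sigma t1 /\ term_in Sigma t2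
  | spred k p args => Sigma (SPred p) /\ allProp (term_in Sigma) args
  | sneg a => sent_in Sigma a
  | sand a b | sor a b | simp a b => sent_in Sigma a /\ sent_in Sigma b
  end.

Fixpoint evalt (f : nat -> nat) (t : term) : nat :=
  match t with
  | tconst n => n
  | tfun k w args => w (tup k (map (evalt f) args))
  | tf t => f (evalt f t)
  | tGf k G args t => G (tup k (map (evalt f) args)) (prefix f (evalt f t))
  end.

Fixpoint holds (f : nat -> nat) (a : qfsent) : bool :=
  match a with
  | sbot => false
  | seqt t1 t2 => evalt f t1 == evalt f t2
  | spred k p args => p (tup k (map (evalt f) args))
  | sneg a => ~~ holds f a
  | sand a b => holds f a && holds f b
  | sor a b => holds f a || holds f b
  | simp a b => holds f a ==> holds f b
  end.

Definition fval (f : nat -> nat) (a : qfsent) : nat := nat_of_bool (holds f a).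

Definition countable_set (Sigma : symbol -> Prop) : Prop :=
  exists e : nat -> symbol, forall s, Sigma s -> exists n, e n = s.

Definition lists_qf_sentences (Sigma : symbol -> Prop) (phi : nat -> qfsent) : Prop :=
  (forall n, wf_sent (phi n) /\ sent_in Sigma (phi n)) /\
  (forall a, wf_sent a -> sent_in Sigma a -> exists n, phi n = a).

Definition eventually (P : nat -> Prop) : Prop := exists N, forall n, N <= n -> P n.

Definition bob_wins (S : (nat -> nat) -> Prop) : Prop :=
  exists (Sigma : symbol -> Prop) (phi : nat -> qfsent) (B : seq nat -> nat),
    countable_set Sigma /\ lists_qf_sentences Sigma phi /\
    forall f : nat -> nat,
      let b := fun n => B [seq fval f (phi i) | i <- iota 0 n.+1] in
      (S f /\ eventually (fun n => b n = 1)) \/ (~ S f /\ eventually (fun n => b n = 0)).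

Definition guessable (S : (nat -> nat) -> Prop) : Prop :=
  exists G : seq nat -> nat, forall f : nat -> nat,
    (S f -> eventually (fun n => G (prefix f n) = 1)) /\
    (~ S f -> eventually (fun n => G (prefix f n) = 0)).

From Pilot Require Import Defs.
From HB Require Import structures.
From mathcomp Require Import all_boot.
From Stdlib Require Import Eqdep_dec PeanoNat Classical.
Set Implicit Arguments.
Unset Strict Implicit.
Unset Printing Implicit Defensive.

(* (=>) A strategy B yields a guesser.  A finite prefix s of f determines the
   value of a closed term or sentence whenever every query f(v) made during its
   evaluation has v < size s.  Partial evaluation on prefixes is never wrong
   and is eventually defined ([approx_peval_sent]).  The guesser evaluates the
   longest initial block phi_0, ..., phi_k of Bob's listing decided by s and
   returns B's move on these answers; eventually this is Bob's true k-th move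
   for ever larger k, so the guesses converge to Bob's limit.

   (<=) A guesser G yields a strategy for Bob.  Take as signature Sigma_G the
   constants together with the single symbol G o f (with no extra arguments).
   Its quantifier-free sentences are, up to syntax, equalities between iterated
   terms (G o f)^d(n) combined by connectives; this normal-form syntax [gsent]
   is countable, which gives the listing.  At move n Bob reports the answer to
   the sentence "(G o f)(m) = 1", i.e. G(f(0), ..., f(m)) = 1, for the largest
   m whose sentence is among phi_0, ..., phi_n; since m grows unboundedly,
   Bob's answers converge to the limit of G. *)

Lemma eventually_and (P Q : nat -> Prop) :
  eventually P -> eventually Q -> eventually (fun n => P n /\ Q n).
Proof.
move=> [M HP] [N HQ]; exists (maxn M N) => n.
by rewrite geq_max => /andP [hM hN]; split; [apply: HP | apply: HQ].
Qed.

Lemma eventually_mono (P Q : nat -> Prop) :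
  (forall n, P n -> Q n) -> eventually P -> eventually Q.
Proof. by move=> PQ [N HP]; exists N => n /HP /PQ. Qed.

(* Evaluation on a finite prefix s of f.  The only access to f is [query s v],
   the prefix (f 0, ..., f v), available when v < size s. *)
Definition query (s : seq nat) (v : nat) : option (seq nat) :=
  if v < size s then Some (take v.+1 s) else None.

Fixpoint olist (A : Type) (l : seq (option A)) : option (seq A) :=
  if l is o :: l' then obind (fun v => omap (cons v) (olist l')) o else Some [::].

Definition olift2 (A B C : Type) (op : A -> B -> C) (x : option A) (y : option B) :
  option C :=
  obind (fun a => omap (op a) y) x.

Fixpoint peval_term (s : seq nat) (t : term) : option nat :=
  match t with
  | tconst n => Some n
  | tfun k w args => omap (fun vs => w (tup k vs)) (olist (map (peval_term s) args))
  | tf t => obind (fun v => omap (fun p => nth 0 p v) (query s v)) (peval_term s t)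
  | tGf k G args t =>
      obind (fun vs => obind (fun v => omap (G (tup k vs)) (query s v)) (peval_term s t))
            (olist (map (peval_term s) args))
  end.

Fixpoint peval_sent (s : seq nat) (a : qfsent) : option bool :=
  match a with
  | sbot => Some false
  | seqt t1 t2 => olift2 eq_op (peval_term s t1) (peval_term s t2)
  | spred k p args => omap (fun vs => p (tup k vs)) (olist (map (peval_term s) args))
  | sneg a => omap negb (peval_sent s a)
  | sand a b => olift2 andb (peval_sent s a) (peval_sent s b)
  | sor a b => olift2 orb (peval_sent s a) (peval_sent s b)
  | simp a b => olift2 implb (peval_sent s a) (peval_sent s b)
  end.

Definition term_ind_nested (P : term -> Prop)
  (Hconst : forall n, P (tconst n))
  (Hfun : forall k w args, allProp P args -> P (@tfun k w args))
  (Hf : forall t, P t -> P (tf t))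
  (HG : forall k G args t, allProp P args -> P t -> P (@tGf k G args t)) :
  forall t, P t :=
  fix rec t := match t return P t with
  | tconst n => Hconst n
  | @tfun k w args => Hfun k w args ((fix go l : allProp P l :=
        match l with [::] => I | u :: l' => conj (rec u) (go l') end) args)
  | tf t => Hf t (rec t)
  | @tGf k G args t => HG k G args t ((fix go l : allProp P l :=
        match l with [::] => I | u :: l' => conj (rec u) (go l') end) args) (rec t)
  end.

Section Approximation.
Variable f : nat -> nat.

Definition approximates (A : Type) (e : seq nat -> option A) (v : A) : Prop :=
  (forall n w, e (Defs.prefix f n) = Some w -> w = v) /\
  eventually (fun n => e (Defs.prefix f n) = Some v).

Lemma approx_ret (A : Type) (v : A) : approximates (fun _ => Some v) v.
Proof. by split; [move=> n w [] | exists 0]. Qed.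

Lemma approx_bind (A B : Type) (e : seq nat -> option A) (k : A -> seq nat -> option B) v w :
  approximates e v -> approximates (k v) w ->
  approximates (fun s => obind (k^~ s) (e s)) w.
Proof.
move=> [e_sound e_ev] [k_sound k_ev]; split.
  by move=> n u; case E: (e _) => [x|] //=; rewrite (e_sound _ _ E); apply: k_sound.
by apply: eventually_mono (eventually_and e_ev k_ev) => n [-> ?].
Qed.

Lemma approx_map (A B : Type) (e : seq nat -> option A) (g : A -> B) v :
  approximates e v -> approximates (fun s => omap g (e s)) (g v).
Proof. by move=> ev; apply: approx_bind ev (approx_ret _). Qed.

Lemma approx_lift2 (A B C : Type) (op : A -> B -> C) e1 e2 v1 v2 :
  approximates e1 v1 -> approximates e2 v2 ->
  approximates (fun s => olift2 op (e1 s) (e2 s)) (op v1 v2).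
Proof. by move=> ev1 ev2; apply: approx_bind ev1 (approx_map _ ev2). Qed.

Lemma approx_query v : approximates (query^~ v) (Defs.prefix f v).
Proof.
have take_prefix n : v < n.+1 -> take v.+1 (Defs.prefix f n) = Defs.prefix f v.
  by move=> lt_vn; rewrite /Defs.prefix -map_take take_iota (minn_idPl lt_vn).
rewrite /query; split; last first.
  by exists v => n le_vn; rewrite size_map size_iota ltnS le_vn take_prefix.
by move=> n w; rewrite size_map size_iota; case: ifP => // /take_prefix -> [].
Qed.

Lemma approx_olist (X A : Type) (e : X -> seq nat -> option A) (val : X -> A) xs :
  allProp (fun x => approximates (e x) (val x)) xs ->
  approximates (fun s => olist [seq e x s | x <- xs]) (map val xs).
Proof.
elim: xs => [|x xs IH] /=; first by move=> _; apply: approx_ret.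
by move=> [ex exs]; apply: (approx_lift2 cons ex (IH exs)).
Qed.

Lemma approx_peval_term t : approximates (peval_term^~ t) (evalt f t).
Proof.
elim/term_ind_nested: t => /= [n | k w args IH | t IH | k G args t IHargs IH].
- exact: approx_ret.
- exact: approx_map (approx_olist IH).
- apply: approx_bind IH _.
  have -> : f (evalt f t) = nth 0 (Defs.prefix f (evalt f t)) (evalt f t).
    by rewrite /Defs.prefix (nth_map 0) ?size_iota // nth_iota.
  exact: approx_map (approx_query _).
- apply: approx_bind (approx_olist IHargs) _.
  exact: approx_bind IH (approx_map _ (approx_query _)).
Qed.

Lemma approx_peval_sent a : approximates (peval_sent^~ a) (holds f a).
Proof.
elim: a => /= [| t1 t2 | k p args | a IH | a IHa b IHb | a IHa b IHb | a IHa b IHb].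
- exact: approx_ret.
- exact: approx_lift2 (approx_peval_term t1) (approx_peval_term t2).
- apply: approx_map (approx_olist _).
  by elim: args => //= t args IH; split; [apply: approx_peval_term | apply: IH].
- exact: approx_map IH.
- exact: approx_lift2 IHa IHb.
- exact: approx_lift2 IHa IHb.
- exact: approx_lift2 IHa IHb.
Qed.

End Approximation.

Section StrategyToGuesser.
Variables (phi : nat -> qfsent) (B : seq nat -> nat).

Definition undecided (s : seq nat) (i : nat) : bool := peval_sent s (phi i) == None.

(* The length of the initial block phi_0, ..., phi_(k-1) decided by s (the
   search is cut off at size s, which keeps it finite). *)
Definition decided_count (s : seq nat) : nat := find (undecided s) (iota 0 (size s)).

Definition guesser (s : seq nat) : nat :=
  if decided_count s is k.+1
  then B [seq nat_of_bool (odflt false (peval_sent s (phi i))) | i <- iota 0 k.+1]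
  else 0.

Lemma decided_before s i : i < decided_count s -> ~~ undecided s i.
Proof.
move=> lt_i; have lt_is : i < size s.
  by apply: leq_trans lt_i _; rewrite -[leqRHS](size_iota 0) find_size.
by have := before_find 0 lt_i; rewrite nth_iota // add0n => ->.
Qed.

Lemma decided_count_ge s K :
  K <= size s -> (forall i, i < K -> ~~ undecided s i) -> K <= decided_count s.
Proof.
move=> le_Ks decK; rewrite leqNgt; apply/negP => lt_cK.
have has_und : has (undecided s) (iota 0 (size s)).
  by rewrite has_find size_iota; apply: leq_trans lt_cK le_Ks.
have := nth_find 0 has_und; rewrite nth_iota ?add0n; last first.
  by move: has_und; rewrite has_find size_iota.
by apply/negP/decK.
Qed.

Lemma eventually_decided f K :
  eventually (fun n => forall i, i < K -> peval_sent (Defs.prefix f n) (phi i) = Some (holds f (phi i))).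
Proof.
elim: K => [|K IH]; first by exists 0.
have [_ evK] := approx_peval_sent f (phi K).
apply: eventually_mono (eventually_and IH evK) => n [IHn HK] i.
by rewrite ltnS leq_eqVlt => /predU1P [-> | /IHn].
Qed.

Lemma guesser_follows f c :
  eventually (fun n => B [seq fval f (phi i) | i <- iota 0 n.+1] = c) ->
  eventually (fun n => guesser (Defs.prefix f n) = c).
Proof.
move=> [M bob_M].
have [N decN] := eventually_decided f M.+1.
exists (maxn N M) => n; rewrite geq_max => /andP [le_Nn le_Mn].
have ge_count : M.+1 <= decided_count (Defs.prefix f n).
  apply: decided_count_ge => [|i /(decN n le_Nn) dec_i].
    by rewrite size_map size_iota ltnS.
  by rewrite /undecided dec_i.
rewrite /guesser; case E: decided_count ge_count => [|k] // le_Mk.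
rewrite -(bob_M k le_Mk); congr B; apply/eq_in_map => i.
rewrite mem_iota add0n => /andP [_ lt_ik].
have : ~~ undecided (Defs.prefix f n) i by apply: decided_before; rewrite E.
rewrite /undecided; case D: peval_sent => [b|] // _.
by have [sound _] := approx_peval_sent f (phi i); rewrite /fval (sound _ _ D).
Qed.

End StrategyToGuesser.

Lemma bob_wins_guessable S : bob_wins S -> guessable S.
Proof.
move=> [Sigma [phi [B [_ [_ bob_wins_f]]]]].
exists (guesser phi B) => f; split => Sf.
  by case: (bob_wins_f f) => [[_ /guesser_follows] | [/(_ Sf)]].
by case: (bob_wins_f f) => [[/Sf] | [_ /guesser_follows]].
Qed.

Fixpoint latest_below (idx : nat -> nat) (n j : nat) : nat :=
  if j is j'.+1 then (if idx j <= n then j else latest_below idx n j') else 0.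

Lemma latest_belowP idx n j K :
  K <= j -> idx K <= n -> K <= latest_below idx n j /\ idx (latest_below idx n j) <= n.
Proof.
elim: j => [|j IH] /=; first by rewrite leqn0 => /eqP ->.
case: ifP => [idx_j le_Kj _ | idx_j le_Kj idx_K]; first by split.
have neq_Kj : K != j.+1 by apply: contraFneq idx_j => <-.
by apply: IH idx_K; rewrite -ltnS ltn_neqAle neq_Kj.
Qed.

(* Normal-form syntax for the sentences over the signature used by Bob:
   [geq d1 n1 d2 n2] stands for (G o f)^d1(n1) = (G o f)^d2(n2). *)
Inductive gsent : Type :=
| gbot
| geq (d1 n1 d2 n2 : nat)
| gneg (a : gsent)
| gand (a b : gsent)
| gor (a b : gsent)
| gimp (a b : gsent).

Fixpoint tree_of_gsent (a : gsent) : GenTree.tree nat :=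
  match a with
  | gbot => GenTree.Node 0 [::]
  | geq d1 n1 d2 n2 => GenTree.Node 1 [seq GenTree.Leaf x | x <- [:: d1; n1; d2; n2]]
  | gneg a => GenTree.Node 2 [:: tree_of_gsent a]
  | gand a b => GenTree.Node 3 [:: tree_of_gsent a; tree_of_gsent b]
  | gor a b => GenTree.Node 4 [:: tree_of_gsent a; tree_of_gsent b]
  | gimp a b => GenTree.Node 5 [:: tree_of_gsent a; tree_of_gsent b]
  end.

Fixpoint gsent_of_tree (x : GenTree.tree nat) : gsent :=
  match x with
  | GenTree.Node 1 [:: GenTree.Leaf d1; GenTree.Leaf n1; GenTree.Leaf d2; GenTree.Leaf n2] =>
      geq d1 n1 d2 n2
  | GenTree.Node 2 [:: a] => gneg (gsent_of_tree a)
  | GenTree.Node 3 [:: a; b] => gand (gsent_of_tree a) (gsent_of_tree b)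
  | GenTree.Node 4 [:: a; b] => gor (gsent_of_tree a) (gsent_of_tree b)
  | GenTree.Node 5 [:: a; b] => gimp (gsent_of_tree a) (gsent_of_tree b)
  | _ => gbot
  end.

Lemma tree_of_gsentK : cancel tree_of_gsent gsent_of_tree.
Proof. by elim=> //= a -> // b ->. Qed.

HB.instance Definition _ := Countable.copy gsent (can_type tree_of_gsentK).

(* [geq 1 m 0 1] codes the sentence G(f(0), ..., f(m)) = 1; Bob's strategy
   plays the answer to the latest such sentence already asked.  Neither
   depends on the guesser G. *)
Definition query_index (m : nat) : nat := pickle (geq 1 m 0 1).

Definition bob_strategy (s : seq nat) : nat :=
  let n := (size s).-1 in nth 0 s (query_index (latest_below query_index n n)).

Section GuesserToStrategy.
Variable G : seq nat -> nat.

(* G as a symbol G o f with no extra arguments: (G o f)(m) = G(f(0..m)). *)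
Definition Gsym : 0.-tuple nat -> seq nat -> nat := fun _ s => G s.

Definition guess_symbols (s : symbol) : Prop := s = SGf Gsym \/ exists n, s = SConst n.

Definition Gterm (d n : nat) : term := iter d (tGf Gsym [::]) (tconst n).

Fixpoint term_code (t : term) : nat * nat :=
  match t with
  | tconst n => (0, n)
  | tGf _ _ _ t => ((term_code t).1.+1, (term_code t).2)
  | _ => (0, 0)
  end.

Fixpoint sent_of_gsent (a : gsent) : qfsent :=
  match a with
  | gbot => sbot
  | geq d1 n1 d2 n2 => seqt (Gterm d1 n1) (Gterm d2 n2)
  | gneg a => sneg (sent_of_gsent a)
  | gand a b => sand (sent_of_gsent a) (sent_of_gsent b)
  | gor a b => sor (sent_of_gsent a) (sent_of_gsent b)
  | gimp a b => simp (sent_of_gsent a) (sent_of_gsent b)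
  end.

Fixpoint gsent_of_sent (a : qfsent) : gsent :=
  match a with
  | seqt t1 t2 => geq (term_code t1).1 (term_code t1).2 (term_code t2).1 (term_code t2).2
  | sneg a => gneg (gsent_of_sent a)
  | sand a b => gand (gsent_of_sent a) (gsent_of_sent b)
  | sor a b => gor (gsent_of_sent a) (gsent_of_sent b)
  | simp a b => gimp (gsent_of_sent a) (gsent_of_sent b)
  | _ => gbot
  end.

Lemma term_codeK t :
  wf_term t -> term_in guess_symbols t -> Gterm (term_code t).1 (term_code t).2 = t.
Proof.
elim: t => //= [k w args _ [[?|[? ?]] _] // | t _ _ [[?|[? ?]] _] // | k G' args t IH].
move=> /and3P [/eqP size_args _ wf_t] [[sym_G|[? ?]] _ in_t] //.
case: sym_G size_args => eq_k; subst k => /(inj_pair2_eq_dec _ Nat.eq_dec _ _ _ _) ->.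
by case: args => // _; rewrite -/(Gterm _ _) IH.
Qed.

Lemma gsent_of_sentK a :
  wf_sent a -> sent_in guess_symbols a -> sent_of_gsent (gsent_of_sent a) = a.
Proof.
elim: a => //= [t1 t2 /andP [wf1 wf2] [in1 in2] | k p args _ [[?|[? ?]] _] // | a IH wf_a in_a |
                a IHa b IHb /andP [wfa wfb] [ina inb] | a IHa b IHb /andP [wfa wfb] [ina inb] |
                a IHa b IHb /andP [wfa wfb] [ina inb]].
- by rewrite !term_codeK.
- by rewrite IH.
- by rewrite IHa ?IHb.
- by rewrite IHa ?IHb.
- by rewrite IHa ?IHb.
Qed.

Lemma Gterm_in d n : wf_term (Gterm d n) /\ term_in guess_symbols (Gterm d n).
Proof.
elim: d => [|d [wf_d in_d]] /=; first by split=> //; right; exists n.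
by rewrite wf_d; split=> //; split=> //; left.
Qed.

Lemma sent_of_gsent_in a : wf_sent (sent_of_gsent a) /\ sent_in guess_symbols (sent_of_gsent a).
Proof.
elim: a => //= [d1 n1 d2 n2 | a [wf_a in_a] b [wf_b in_b] | a [wf_a in_a] b [wf_b in_b] |
                a [wf_a in_a] b [wf_b in_b]].
- by have [-> ?] := Gterm_in d1 n1; have [-> ?] := Gterm_in d2 n2.
- by rewrite wf_a wf_b.
- by rewrite wf_a wf_b.
- by rewrite wf_a wf_b.
Qed.

Definition enum_sent (n : nat) : qfsent :=
  if unpickle n is Some a then sent_of_gsent a else sbot.

Lemma guess_symbols_countable : countable_set guess_symbols.
Proof.
exists (fun n => if n is n'.+1 then SConst n' else SGf Gsym) => s [->|[n ->]].
  by exists 0.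
by exists n.+1.
Qed.

Lemma enum_sent_lists : lists_qf_sentences guess_symbols enum_sent.
Proof.
split=> [n | a wf_a in_a].
  by rewrite /enum_sent; case: unpickle => [a|//]; apply: sent_of_gsent_in.
by exists (pickle (gsent_of_sent a)); rewrite /enum_sent pickleK gsent_of_sentK.
Qed.

Lemma fval_query f m : fval f (enum_sent (query_index m)) = (G (Defs.prefix f m) == 1).
Proof. by rewrite /enum_sent /query_index pickleK. Qed.

(* If the guesses stabilise at c in {0, 1}, so do Bob's moves: the latest
   query asked tends to infinity. *)
Lemma bob_strategy_follows f c : c <= 1 ->
  eventually (fun n => G (Defs.prefix f n) = c) ->
  eventually (fun n => bob_strategy [seq fval f (enum_sent i) | i <- iota 0 n.+1] = c).
Proof.
move=> le_c1 [N guess_N]; exists (maxn N (query_index N)) => n.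
rewrite geq_max => /andP [le_Nn idx_N].
have [le_Nj idx_j] := latest_belowP (idx := query_index) le_Nn idx_N.
rewrite /bob_strategy size_map size_iota -pred_Sn (nth_map 0) ?size_iota ?ltnS //.
rewrite nth_iota ?ltnS // add0n fval_query guess_N; last exact: leq_trans le_Nj.
by case: c le_c1 {guess_N} => [|[]].
Qed.

End GuesserToStrategy.

Lemma guessable_bob_wins S : guessable S -> bob_wins S.
Proof.
move=> [G guess_G].
exists (@guess_symbols G), (@enum_sent G), bob_strategy.
split; first exact: guess_symbols_countable.
split=> [|f /=]; first exact: enum_sent_lists.
have [guess_in guess_out] := guess_G f.
have [Sf | nSf] := classic (S f).
  by left; split=> //; apply: bob_strategy_follows (guess_in Sf).
by right; split=> //; apply: bob_strategy_follows (guess_out nSf).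
Qed.

Theorem mainTheorem6 (S : (nat -> nat) -> Prop) : bob_wins S <-> guessable S.
Proof. by split; [exact: bob_wins_guessable | exact: guessable_bob_wins]. Qed.
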